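(* Fix a leader policy $\pi$, let $\nu^\pi$ be its quantal response under the true model, let $\tilde\nu=\{\tilde\nu_h(\cdot\mid s)\in\Delta(\mathcal B)\}$ be any follower policy, and let $\tilde U_h:\mathcal S\times\mathcal A\times\mathcal B\to\mathbb R$, $\tilde W_h:\mathcal S\to\mathbb R$ ($h\in[H]$) be arbitrary functions with $\|\tilde U_h\|_\infty\le H$, and set $\tilde U_{H+1}=0$, $\tilde W_{H+1}=0$. Then $$\mathbb E_{s_1\sim\rho_0}\bigl[(T_1^{\pi,\tilde\nu}\tilde U_1)(s_1)\bigr]-J(\pi)\le\sum_{h=1}^H\mathbb E\bigl[(\tilde U_h-u_h)(s_h,a_h,b_h)-(T_{h+1}^{\pi,\tilde\nu}\tilde U_{h+1})(s_{h+1})\bigr]+\sum_{h=1}^H H\,\mathbb E\bigl[\|\tilde\nu_h(\cdot\mid s_h)-\nu_h^\pi(\cdot\mid s_h)\|_1\bigr],$$ and $$\mathbb E_{s_1\sim\rho_0}\bigl[\tilde W_1(s_1)\bigr]-J(\pi)\le\sum_{h=1}^H\mathbb E\bigl[(\tilde U_h-u_h)(s_h,a_h,b_h)-\tilde W_{h+1}(s_{h+1})\bigr]+\sum_{h=1}^H\mathbb E\bigl[\tilde W_h(s_h)-(T_h^{\pi,\tilde\nu}\tilde U_h)(s_h)\bigr]+\sum_{h=1}^H H\,\mathbb E\bigl[\|\tilde\nu_h(\cdot\mid s_h)-\nu_h^\pi(\cdot\mid s_h)\|_1\bigr],$$ where $\mathbb E$ is over a trajectory generated by $(\pi,\nu^\pi)$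 on the true model.
   Context: Episodic leader–follower Markov game (true model): state space $\mathcal S$, action sets $\mathcal A$ (leader), $\mathcal B$ (follower), horizon $H$, initial distribution $\rho_0$, transitions $P_h(\cdot\mid s,a,b)$, leader rewards $u_h\in[0,1]$, follower rewards $r_h\in[0,1]$. Leader policy: $\pi_h(\cdot\mid s,b)\in\Delta(\mathcal A)$; follower policy $\nu_h(\cdot\mid s)\in\Delta(\mathcal B)$; at step $h$, $b_h\sim\nu_h(\cdot\mid s_h)$, $a_h\sim\pi_h(\cdot\mid s_h,b_h)$, $s_{h+1}\sim P_h(\cdot\mid s_h,a_h,b_h)$. With $\eta>0,\gamma\in[0,1]$, the quantal response $\nu^\pi$ is defined by backward recursion: $V_{H+1}^\pi=0$, $Q_h^\pi(s,b)=\sum_a\pi_h(a\mid s,b)\bigl(r_h(s,a,b)+\gamma\mathbb E_{s'\sim P_h(\cdot\mid s,a,b)}V_{h+1}^\pi(s')\bigr)$, $V_h^\pi(s)=\eta^{-1}\log\sum_b e^{\eta Q_h^\pi(s,b)}$, $\nu_h^\pi(b\mid s)=\exp(\eta(Q_h^\pi(s,b)-V_h^\pi(s)))$. Leader values: $W_{H+1}^\pi=0$, $U_h^\pi=u_h+P_hW_{h+1}^\pi$, $W_h^\pi=T_h^{\pi,\nu^\pi}U_h^\pi$, $J(\pi)=\mathbb E_{s_1\sim\rho_0}W_1^\pi(s_1)$, where for a follower policy $\nu$ the operator is $(T_h^{\pi,\nu}f)(s)=\sum_{a,b}f(s,a,b)\pi_h(a\mid s,b)\nu_h(b\mid s)$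 (and $T_{H+1}^{\pi,\nu}\tilde U_{H+1}=0$). *)

From HB Require Import structures.
From mathcomp Require Import all_boot all_order all_algebra.
From mathcomp Require Import all_classical all_reals all_analysis.
Set Implicit Arguments. Unset Strict Implicit. Unset Printing Implicit Defensive.
Import Order.TTheory GRing.Theory Num.Theory.
Local Open Scope ring_scope.

(* Conventions: steps are natural numbers h, meaningful for 1 <= h <= H
   (H+1 is the terminal step).
   pi  h s b a   = pi_h(a | s, b)          (leader policy)
   nu  h s b     = nu_h(b | s)             (follower policy)
   P   h s a b s'= P_h(s' | s, a, b)
   u r h s a b   = leader / follower rewards. *)

Section Game.
Variables (R : realType) (S A B : finType) (H : nat).
Variables (rho0 : S -> R) (P : nat -> S -> A -> B -> S -> R)
          (u r : nat -> S -> A -> B -> R) (eta gamma : R).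

Definition Top (pi : nat -> S -> B -> A -> R) (nu : nat -> S -> B -> R)
    (h : nat) (f : S -> A -> B -> R) (s : S) : R :=
  \sum_(a : A) \sum_(b : B) f s a b * pi h s b a * nu h s b.

Variable pi : nat -> S -> B -> A -> R.

Definition Qof (h : nat) (Vnext : S -> R) (s : S) (b : B) : R :=
  \sum_(a : A) pi h s b a *
     (r h s a b + gamma * \sum_(s' : S) P h s a b s' * Vnext s').

(* Vrem k = V_{H+1-k}  (k = number of remaining steps) *)
Fixpoint Vrem (k : nat) : S -> R :=
  match k with
  | 0 => fun _ => 0
  | k'.+1 => fun s =>
      ln (\sum_(b : B) expR (eta * Qof (H - k') (Vrem k') s b)) / eta
  end.

Definition Vqr (h : nat) : S -> R := Vrem (H.+1 - h).
Definition Qqr (h : nat) (s : S) (b : B) : R := Qof h (Vqr h.+1) s b.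
Definition nuqr (h : nat) (s : S) (b : B) : R :=
  expR (eta * (Qqr h s b - Vqr h s)).

(* leader values: Wrem k = W^pi_{H+1-k} *)
Fixpoint Wrem (k : nat) : S -> R :=
  match k with
  | 0 => fun _ => 0
  | k'.+1 => Top pi nuqr (H - k')
      (fun s a b => u (H - k') s a b + \sum_(s' : S) P (H - k') s a b s' * Wrem k' s')
  end.

Definition Wpi (h : nat) : S -> R := Wrem (H.+1 - h).
Definition Upi (h : nat) (s : S) (a : A) (b : B) : R :=
  u h s a b + \sum_(s' : S) P h s a b s' * Wpi h.+1 s'.
Definition Jpi : R := \sum_(s : S) rho0 s * Wpi 1 s.

(* state distribution of s_{n+1} along a trajectory generated by (pi, nu^pi) *)
Fixpoint occ (n : nat) : S -> R :=
  match n with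
  | 0 => rho0
  | n'.+1 => fun s' => \sum_(s : S) \sum_(b : B) \sum_(a : A)
        occ n' s * nuqr n'.+1 s b * pi n'.+1 s b a * P n'.+1 s a b s'
  end.

Definition dstate (h : nat) : S -> R := occ h.-1.

Definition Etraj (h : nat) (f : S -> A -> B -> S -> R) : R :=
  \sum_(s : S) \sum_(b : B) \sum_(a : A) \sum_(s' : S)
    dstate h s * nuqr h s b * pi h s b a * P h s a b s' * f s a b s'.

End Game.

Definition is_distr (R : realType) (T : finType) (p : T -> R) : Prop :=
  (forall x, 0 <= p x) /\ \sum_(x : T) p x = 1.

(* Let d_h be the law of s_h under (pi, nu^pi) and <d, f> := sum_s d(s) f(s).
   Unrolling the recursion of W^pi gives J(pi) = sum_h <d_h, T_h^{pi,nu^pi} u_h>.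
   For any g with g_{H+1} = 0 the differences <d_h, g_h> - <d_{h+1}, g_{h+1}>
   telescope to <rho0, g_1>, which yields the exact identity
     <rho0, g_1> - J(pi) = sum_h E[(U~_h - u_h)(s_h,a_h,b_h) - g_{h+1}(s_{h+1})]
                         + sum_h <d_h, g_h - T_h^{pi,nu^pi} U~_h>.
   Both bounds are this identity, for g_h = T_h^{pi,nu~} U~_h and for g_h = W~_h;
   the only inequality used is
     T_h^{pi,nu~} U~_h - T_h^{pi,nu^pi} U~_h <= H ||nu~_h - nu^pi_h||_1,
   which holds because |U~_h| <= H and each pi_h(.|s,b) is a distribution. *)

From HB Require Import structures.
From mathcomp Require Import all_boot all_order all_algebra.
From mathcomp Require Import all_classical all_reals all_analysis.
From mathcomp Require Import ring.
Set Implicit Arguments.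
Unset Strict Implicit.
Unset Printing Implicit Defensive.
Import Order.TTheory GRing.Theory Num.Theory.
Local Open Scope ring_scope.

Lemma telescope_sumr_down (V : zmodType) (m n : nat) (f : nat -> V) : (m <= n)%N ->
  \sum_(m <= k < n) (f k - f k.+1) = f m - f n.
Proof.
move=> le_mn; rewrite -[RHS]opprB -telescope_sumr // -sumrN.
by apply: eq_bigr => k _; rewrite opprB.
Qed.

Lemma sum_expR_softmax (R : realType) (B : finType) (eta : R) (Q : B -> R) :
  eta != 0 -> (0 < #|B|)%N ->
  \sum_b expR (eta * (Q b - ln (\sum_b' expR (eta * Q b')) / eta)) = 1.
Proof.
move=> eta_neq0 /card_gt0P[b0 _].
set Z := \sum_b' expR (eta * Q b').
have Z_gt0 : 0 < Z.
  rewrite /Z (bigD1 b0) //= ltr_pwDl ?expR_gt0 //.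
  by apply: sumr_ge0 => b _; exact: expR_ge0.
under eq_bigr => b _ do rewrite mulrBr mulrCA divff // mulr1 expRB lnK //.
by rewrite -mulr_suml divff // gt_eqF.
Qed.

Lemma distr_card_gt0 (R : realType) (T : finType) (p : T -> R) :
  is_distr p -> (0 < #|T|)%N.
Proof.
case=> _ p1; rewrite lt0n; apply/negP => /eqP/card0_eq T0.
by move: p1; rewrite big_pred0 // => /eqP; rewrite eq_sym oner_eq0.
Qed.

Section Operator.
Variables (R : realType) (S A B : finType) (pi : nat -> S -> B -> A -> R).

Lemma TopD (nu : nat -> S -> B -> R) h (f g : S -> A -> B -> R) s :
  Top pi nu h (fun s a b => f s a b + g s a b) s = Top pi nu h f s + Top pi nu h g s.
Proof.
rewrite /Top -big_split; apply: eq_bigr => a _; rewrite -big_split.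
by apply: eq_bigr => b _; rewrite !mulrDl.
Qed.

Lemma Top_cst (nu : nat -> S -> B -> R) h (g : S -> R) s :
  (forall b, \sum_a pi h s b a = 1) -> \sum_b nu h s b = 1 ->
  Top pi nu h (fun s _ _ => g s) s = g s.
Proof.
move=> pi1 nu1; rewrite /Top exchange_big -[RHS]mulr1 -nu1 mulr_sumr.
apply: eq_bigr => b _; rewrite -mulr_suml -mulr_sumr pi1; ring.
Qed.

Lemma Top_sub_le (nu1 nu2 : nat -> S -> B -> R) h (f : S -> A -> B -> R) s c :
  (forall b, is_distr (pi h s b)) -> (forall a b, `|f s a b| <= c) ->
  Top pi nu1 h f s - Top pi nu2 h f s <= c * \sum_b `|nu1 h s b - nu2 h s b|.
Proof.
move=> pi_distr f_le.
have -> : Top pi nu1 h f s - Top pi nu2 h f s =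
    \sum_b (nu1 h s b - nu2 h s b) * \sum_a f s a b * pi h s b a.
  rewrite /Top -sumrB; under eq_bigr => a _ do rewrite -sumrB.
  rewrite exchange_big; apply: eq_bigr => b _.
  rewrite mulr_sumr; apply: eq_bigr => a _; ring.
rewrite mulr_sumr; apply: ler_sum => b _.
have [pi_ge0 pi1] := pi_distr b.
have mean_le : `|\sum_a f s a b * pi h s b a| <= c.
  rewrite -[c]mulr1 -pi1 mulr_sumr; apply: le_trans (ler_norm_sum _ _ _) _.
  apply: ler_sum => a _; rewrite normrM (ger0_norm (pi_ge0 a)).
  exact: ler_wpM2r.
by rewrite (le_trans (ler_norm _)) // normrM mulrC ler_wpM2r.
Qed.

End Operator.

Section StepExpectation.
Variables (R : realType) (S A B : finType).
Variables (P : nat -> S -> A -> B -> S -> R) (pi : nat -> S -> B -> A -> R).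
Variable nu : nat -> S -> B -> R.

Definition next_law (h : nat) (d : S -> R) (s' : S) : R :=
  \sum_(s : S) \sum_(b : B) \sum_(a : A) d s * nu h s b * pi h s b a * P h s a b s'.

Definition Estep (h : nat) (d : S -> R) (F : S -> A -> B -> S -> R) : R :=
  \sum_(s : S) \sum_(b : B) \sum_(a : A) \sum_(s' : S)
    d s * nu h s b * pi h s b a * P h s a b s' * F s a b s'.

Lemma next_law_ge0 h d s' :
  (forall s, 0 <= d s) -> (forall s b, 0 <= nu h s b) ->
  (forall s b a, 0 <= pi h s b a) -> (forall s a b, 0 <= P h s a b s') ->
  0 <= next_law h d s'.
Proof.
move=> d_ge0 nu_ge0 pi_ge0 P_ge0.
do 3!(apply: sumr_ge0 => ? _); rewrite !mulr_ge0 //.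
Qed.

Lemma EstepE h d F :
  Estep h d F =
  \sum_s d s * Top pi nu h (fun s a b => \sum_s' P h s a b s' * F s a b s') s.
Proof.
apply: eq_bigr => s _; rewrite /Top exchange_big mulr_sumr; apply: eq_bigr => b _.
rewrite mulr_sumr; apply: eq_bigr => a _.
by rewrite !mulr_suml mulr_sumr; apply: eq_bigr => s' _; ring.
Qed.

Lemma EstepB h d F G :
  Estep h d (fun s a b s' => F s a b s' - G s a b s') = Estep h d F - Estep h d G.
Proof.
rewrite /Estep -sumrB; apply: eq_bigr => s _; rewrite -sumrB; apply: eq_bigr => b _.
rewrite -sumrB; apply: eq_bigr => a _; rewrite -sumrB; apply: eq_bigr => s' _.
by rewrite mulrBr.
Qed.

Lemma sum_Top_next h d (g : S -> R) :
  \sum_s d s * Top pi nu h (fun s a b => \sum_s' P h s a b s' * g s') s =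
  \sum_s' next_law h d s' * g s'.
Proof.
rewrite /next_law /Top; symmetry.
under eq_bigr => s' _ do rewrite mulr_suml.
rewrite exchange_big; apply: eq_bigr => s _.
under eq_bigr => s' _ do rewrite mulr_suml.
rewrite exchange_big [in RHS]exchange_big mulr_sumr; apply: eq_bigr => b _.
under eq_bigr => s' _ do rewrite mulr_suml.
rewrite exchange_big mulr_sumr; apply: eq_bigr => a _.
by rewrite !mulr_suml mulr_sumr; apply: eq_bigr => s' _; ring.
Qed.

Lemma Estep_next h d (g : S -> R) :
  Estep h d (fun _ _ _ s' => g s') = \sum_s' next_law h d s' * g s'.
Proof. by rewrite EstepE sum_Top_next. Qed.

Lemma Estep_sab h d (f : S -> A -> B -> R) :
  (forall s a b, \sum_s' P h s a b s' = 1) ->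
  Estep h d (fun s a b _ => f s a b) = \sum_s d s * Top pi nu h f s.
Proof.
move=> P1; rewrite EstepE; apply: eq_bigr => s _; congr (_ * _).
by apply: eq_bigr => a _; apply: eq_bigr => b _; rewrite -mulr_suml P1 mul1r.
Qed.

End StepExpectation.

Section Game.
Context {R : realType} {S A B : finType} {H : nat}.
Context {rho0 : S -> R} {P : nat -> S -> A -> B -> S -> R}.
Context {u r : nat -> S -> A -> B -> R} {eta gamma : R}.
Context { pi : nat -> S -> B -> A -> R }.

Local Notation nuq := (nuqr H P r eta gamma pi).
Local Notation W := (Wpi H P u r eta gamma pi).
Local Notation d := (dstate H rho0 P r eta gamma pi).
Local Notation E := (Etraj H rho0 P r eta gamma pi).

Hypothesis rho0_distr : is_distr rho0.
Hypothesis P_distr : forall h, (1 <= h <= H)%N -> forall s a b, is_distr (P h s a b).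
Hypothesis pi_distr : forall h, (1 <= h <= H)%N -> forall s b, is_distr (pi h s b).

Lemma VqrE h s : (h <= H)%N ->
  Vqr H P r eta gamma pi h s =
  ln (\sum_b expR (eta * Qqr H P r eta gamma pi h s b)) / eta.
Proof. by move=> le_hH; rewrite /Vqr subSn //= subKn. Qed.

Lemma sum_nuqr h s : eta != 0 -> (0 < #|B|)%N -> (h <= H)%N ->
  \sum_b nuq h s b = 1.
Proof. by move=> eta_neq0 B_gt0 le_hH; rewrite /nuqr VqrE // sum_expR_softmax. Qed.

Lemma WpiE h : (h <= H)%N -> W h = Top pi nuq h (Upi H P u r eta gamma pi h).
Proof. by move=> le_hH; rewrite /Wpi subSn //= subKn. Qed.

Lemma Wpi_end s : W H.+1 s = 0.
Proof. by rewrite /Wpi subnn. Qed.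

Lemma dstateS h : (0 < h)%N -> d h.+1 = next_law P pi nuq h (d h).
Proof. by case: h. Qed.

Lemma dstate_ge0 h s : (h <= H.+1)%N -> 0 <= d h s.
Proof.
elim: h s => [|h IH] s le_hH; first exact: rho0_distr.1.
have [->|h_gt0] := posnP h; first exact: rho0_distr.1.
have hH : (1 <= h <= H)%N by rewrite h_gt0 -ltnS.
rewrite dstateS //; apply: next_law_ge0 => [s0|s0 b|s0 b a|s0 a b].
- exact: IH (ltnW le_hH).
- exact: expR_ge0.
- exact: (pi_distr hH s0 b).1.
- exact: (P_distr hH s0 a b).1.
Qed.

Lemma EtrajB h F G :
  E h (fun s a b s' => F s a b s' - G s a b s') = E h F - E h G.
Proof. exact: EstepB. Qed.

Lemma Etraj_next h (g : S -> R) : (0 < h)%N ->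
  E h (fun _ _ _ s' => g s') = \sum_s d h.+1 s * g s.
Proof. by move=> h_gt0; rewrite dstateS //; exact: Estep_next. Qed.

Lemma Etraj_sab h (f : S -> A -> B -> R) : (1 <= h <= H)%N ->
  E h (fun s a b _ => f s a b) = \sum_s d h s * Top pi nuq h f s.
Proof. by move=> hH; apply: Estep_sab => s a b; case: (P_distr hH s a b). Qed.

Lemma Etraj_state h (g : S -> R) : (1 <= h <= H)%N ->
  (forall s, \sum_b nuq h s b = 1) ->
  E h (fun s _ _ _ => g s) = \sum_s d h s * g s.
Proof.
move=> hH nuq1; rewrite Etraj_sab //; apply: eq_bigr => s _.
by rewrite Top_cst // => b; case: (pi_distr hH s b).
Qed.

Lemma JpiE :
  Jpi H rho0 P u r eta gamma pi =
  \sum_(1 <= h < H.+1) \sum_s d h s * Top pi nuq h (u h) s.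
Proof.
pose x h := \sum_s d h s * W h s.
have x_end : x H.+1 = 0 by rewrite /x big1 // => s _; rewrite Wpi_end mulr0.
have -> : Jpi H rho0 P u r eta gamma pi = x 1 - x H.+1 by rewrite x_end subr0.
rewrite -telescope_sumr_down //; apply: eq_big_nat => h hH.
have x_step : x h = \sum_s d h s * Top pi nuq h (u h) s + x h.+1.
  rewrite /x WpiE /Upi; last by case/andP: hH.
  under eq_bigr => s _ do rewrite TopD mulrDr.
  by rewrite big_split sum_Top_next -dstateS //; case/andP: hH.
by rewrite x_step addrK.
Qed.

Lemma Jpi_gap_decomposition (g : nat -> S -> R) (Ut : nat -> S -> A -> B -> R) :
  (forall s, g H.+1 s = 0) ->
  \sum_s rho0 s * g 1 s - Jpi H rho0 P u r eta gamma pi =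
    \sum_(1 <= h < H.+1) E h (fun s a b s' => (Ut h s a b - u h s a b) - g h.+1 s')
  + \sum_(1 <= h < H.+1) \sum_s d h s * (g h s - Top pi nuq h (Ut h) s).
Proof.
move=> g_end; pose y h := \sum_s d h s * g h s.
have y_end : y H.+1 = 0 by rewrite /y big1 // => s _; rewrite g_end mulr0.
have -> : \sum_s rho0 s * g 1 s = y 1 - y H.+1 by rewrite y_end subr0.
rewrite JpiE -(@telescope_sumr_down _ 1 H.+1 y) // -sumrB -big_split /=.
apply: eq_big_nat => h hH; have h_gt0 : (0 < h)%N by case/andP: hH.
have gap_split : \sum_s d h s * (g h s - Top pi nuq h (Ut h) s) =
    y h - \sum_s d h s * Top pi nuq h (Ut h) s.
  by rewrite /y -sumrB; apply: eq_bigr => s _; rewrite mulrBr.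
rewrite !EtrajB Etraj_next // !Etraj_sab // gap_split /y; ring.
Qed.

Lemma Top_gap_le_TV (nu : nat -> S -> B -> R) (f : S -> A -> B -> R) c h :
  (1 <= h <= H)%N -> (forall s, \sum_b nuq h s b = 1) ->
  (forall s a b, `|f s a b| <= c) ->
  \sum_s d h s * (Top pi nu h f s - Top pi nuq h f s) <=
  c * E h (fun s _ _ _ => \sum_b `|nu h s b - nuq h s b|).
Proof.
move=> hH nuq1 f_le; rewrite Etraj_state // mulr_sumr; apply: ler_sum => s _.
rewrite mulrCA; apply: ler_wpM2l; first by apply: dstate_ge0; case/andP: hH => _ /leqW.
by apply: Top_sub_le => // b; exact: pi_distr.
Qed.

End Game.

Theorem mainTheorem3 (R : realType) (S A B : finType) (H : nat)
  (rho0 : S -> R) (P : nat -> S -> A -> B -> S -> R)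
  (u r : nat -> S -> A -> B -> R) (eta gamma : R)
  (pi : nat -> S -> B -> A -> R) (nut : nat -> S -> B -> R)
  (Ut : nat -> S -> A -> B -> R) (Wt : nat -> S -> R) :
  0 < eta -> 0 <= gamma <= 1 ->
  is_distr rho0 ->
  (forall h, (1 <= h <= H)%N -> forall s a b, is_distr (P h s a b)) ->
  (forall h, (1 <= h <= H)%N -> forall s a b, 0 <= u h s a b <= 1) ->
  (forall h, (1 <= h <= H)%N -> forall s a b, 0 <= r h s a b <= 1) ->
  (forall h, (1 <= h <= H)%N -> forall s b, is_distr (pi h s b)) ->
  (forall h, (1 <= h <= H)%N -> forall s, is_distr (nut h s)) ->
  (forall h, (1 <= h <= H)%N -> forall s a b, `|Ut h s a b| <= H%:R) ->
  (forall s a b, Ut H.+1 s a b = 0) ->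
  (forall s, Wt H.+1 s = 0) ->
  let nuq := nuqr H P r eta gamma pi in
  let J := Jpi H rho0 P u r eta gamma pi in
  let E := Etraj H rho0 P r eta gamma pi in
  let TV h := E h (fun s _ _ _ => \sum_(b : B) `|nut h s b - nuq h s b|) in
  (\sum_(s : S) rho0 s * Top pi nut 1 (Ut 1) s - J
     <= \sum_(1 <= h < H.+1)
          E h (fun s a b s' => (Ut h s a b - u h s a b)
                               - Top pi nut h.+1 (Ut h.+1) s')
        + \sum_(1 <= h < H.+1) H%:R * TV h)
  /\
  (\sum_(s : S) rho0 s * Wt 1 s - J
     <= \sum_(1 <= h < H.+1)
          E h (fun s a b s' => (Ut h s a b - u h s a b) - Wt h.+1 s')
        + \sum_(1 <= h < H.+1) E h (fun s _ _ _ => Wt h s - Top pi nut h (Ut h) s)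
        + \sum_(1 <= h < H.+1) H%:R * TV h).
Proof.
move=> /lt0r_neq0 eta_neq0 _ rho0_distr P_distr _ _ pi_distr nut_distr Ut_le
  Ut_end Wt_end nuq J E TV.
pose d := dstate H rho0 P r eta gamma pi.
pose Tnut h := Top pi nut h (Ut h).
have nuq1 h : (1 <= h <= H)%N -> forall s, \sum_b nuq h s b = 1.
  move=> hH s; apply: sum_nuqr => //; last by case/andP: hH.
  exact: distr_card_gt0 (nut_distr h hH s).
have gap_le : \sum_(1 <= h < H.+1) \sum_s d h s * (Tnut h s - Top pi nuq h (Ut h) s)
    <= \sum_(1 <= h < H.+1) H%:R * TV h.
  apply: ler_sum_nat => h hH.
  by apply: Top_gap_le_TV => //; [exact: nuq1 | exact: Ut_le].
have Tnut_end s : Tnut H.+1 s = 0.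
  by rewrite /Tnut /Top big1 // => a _; rewrite big1 // => b _; rewrite Ut_end !mul0r.
rewrite /J; split.
  by rewrite (Jpi_gap_decomposition P_distr (g := Tnut) Ut Tnut_end) lerD2l.
rewrite (Jpi_gap_decomposition P_distr Ut Wt_end) -addrA lerD2l.
have -> : \sum_(1 <= h < H.+1) \sum_s d h s * (Wt h s - Top pi nuq h (Ut h) s) =
    \sum_(1 <= h < H.+1) E h (fun s _ _ _ => Wt h s - Tnut h s)
  + \sum_(1 <= h < H.+1) \sum_s d h s * (Tnut h s - Top pi nuq h (Ut h) s).
  rewrite -big_split /=; apply: eq_big_nat => h hH.
  rewrite /E Etraj_state //; last exact: nuq1.
  rewrite -big_split /=; apply: eq_bigr => s _.
  by rewrite -mulrDr addrA subrK.
by rewrite lerD2l.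
Qed.
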